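(* Let $G$ be a full Frobenius group of finite Morley rank with proper full Frobenius complement $B$. Then: (1) $B$ is infinite; (2) if $G$ is connected, then $B$ is connected; (3) if $N$ is a non-trivial definable normal subgroup of $G$, then $G=NB$.
   Context: A subgroup $B$ of a group $G$ is malnormal if $B\cap B^g=\{1\}$ for all $g\in G\setminus B$. A full Frobenius complement of a group $G$ of finite Morley rank is a definable malnormal subgroup of $G$ whose conjugates $B^g$ ($g\in G$) cover $G$. A group $G$ of finite Morley rank is a full Frobenius group if it has a proper full Frobenius complement $B$; the conjugates of $B$ are then called the Borel subgroups of $G$. *)

From Stdlib Require Import List.
From mathcomp Require Import all_boot.

Set Implicit Arguments.
Unset Strict Implicit.
Unset Printing Implicit Defensive.

(* Groups of finite Morley rank, presented as ranked groups                 *)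
(* (Borovik--Poizat ranked universe, as in Borovik--Nesin, Groups of       *)
(* finite Morley rank'' which Poizat showed equivalent to finite Morley     *)
(* rank).  The definable sets of the (possibly expanded) structure on G are *)
(* given as predicates on the powers G^n = ('I_n -> G), with parameters.    *)

Definition tjoin (T : Type) (n m : nat) (x : 'I_n -> T) (y : 'I_m -> T)
  : 'I_(n + m) -> T :=
  fun i => match fintype.split i with inl j => x j | inr k => y k end.

Definition fibre (T : Type) (n m : nat) (A : ('I_(n + m) -> T) -> Prop)
  (x : 'I_n -> T) : ('I_m -> T) -> Prop := fun y => A (tjoin x y).

Definition finite_set (U : Type) (P : U -> Prop) : Prop :=
  exists s : list U, forall y, P y -> In y s.

Record fMR_group : Type := FMRGroup {
  carrier :> Type;
  gmul : carrier -> carrier -> carrier;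
  gone : carrier;
  ginv : carrier -> carrier;
  gmulA : forall x y z, gmul x (gmul y z) = gmul (gmul x y) z;
  gmul1 : forall x, gmul gone x = x;
  gmulV : forall x, gmul (ginv x) x = gone;
  Def : forall n, (('I_n -> carrier) -> Prop) -> Prop;
  Def_ext : forall n (A A' : ('I_n -> carrier) -> Prop),
      Def A -> (forall x, A x <-> A' x) -> Def A';
  Def_true : forall n, Def (fun _ : 'I_n -> carrier => True);
  Def_compl : forall n (A : ('I_n -> carrier) -> Prop),
      Def A -> Def (fun x => ~ A x);
  Def_inter : forall n (A A' : ('I_n -> carrier) -> Prop),
      Def A -> Def A' -> Def (fun x => A x /\ A' x);
  Def_eq : forall n (i j : 'I_n), Def (fun x : 'I_n -> carrier => x i = x j);
  Def_const : forall n (i : 'I_n) (c : carrier),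
      Def (fun x : 'I_n -> carrier => x i = c);
  Def_mul : forall n (i j k : 'I_n),
      Def (fun x : 'I_n -> carrier => gmul (x i) (x j) = x k);
  (* substitution of variables: permutations, diagonals, dummy variables *)
  Def_sub : forall k n (s : 'I_k -> 'I_n) (A : ('I_k -> carrier) -> Prop),
      Def A -> Def (fun x : 'I_n -> carrier => A (fun i => x (s i)));
  Def_proj : forall n m (A : ('I_(n + m) -> carrier) -> Prop),
      Def A -> Def (fun x : 'I_n -> carrier => exists y, fibre A x y);
  (* the rank (meaningful on nonempty definable sets) *)
  rk : forall n, (('I_n -> carrier) -> Prop) -> nat;
  rk_def : forall n (A : ('I_n -> carrier) -> Prop), Def A ->
      (exists x, A x) -> forall m,
      (m.+1 <= rk A) <->
      (exists Bf : nat -> ('I_n -> carrier) -> Prop,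
          (forall k, Def (Bf k) /\ (exists x, Bf k x) /\
                     (forall x, Bf k x -> A x) /\ m <= rk (Bf k)) /\
          (forall k l x, k <> l -> Bf k x -> Bf l x -> False));
  rk_definable : forall n m (A : ('I_(n + m) -> carrier) -> Prop) (k : nat),
      Def A ->
      Def (fun x : 'I_n -> carrier =>
             (exists y, fibre A x y) /\ rk (fibre A x) = k);
  rk_add : forall n m (A : ('I_(n + m) -> carrier) -> Prop) (k : nat),
      Def A -> (exists z, A z) ->
      (forall x, (exists y, fibre A x y) -> rk (fibre A x) = k) ->
      rk A = rk (fun x : 'I_n -> carrier => exists y, fibre A x y) + k;
  rk_elim : forall n m (A : ('I_(n + m) -> carrier) -> Prop),
      Def A -> exists N : nat, forall x : 'I_n -> carrier,
        finite_set (fibre A x) ->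
        exists s : list ('I_m -> carrier),
          length s <= N /\ forall y, fibre A x y -> In y s
}.

Section GroupNotions.
Variable G : fMR_group.
Implicit Types (H K : G -> Prop) (g x : G).

Local Notation "x * y" := (gmul x y).
Local Notation "1" := (gone G).
Local Notation "x ^-1" := (ginv x).

Definition definable H : Prop := Def (fun x : 'I_1 -> G => H (x ord0)).

Definition is_subgroup H : Prop :=
  H 1 /\ (forall x y, H x -> H y -> H (x * y)) /\ (forall x, H x -> H (x^-1)).

Definition definable_subgroup H : Prop := is_subgroup H /\ definable H.

(* the conjugate H^g = g^-1 H g *)
Definition conj_set H g : G -> Prop := fun x => H (g * x * g^-1).

Definition malnormal H : Prop :=
  forall g, ~ H g -> forall x, H x -> conj_set H g x -> x = 1.

Definition full_frobenius_complement B : Prop :=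
  definable_subgroup B /\ malnormal B /\ (forall x, exists g, conj_set B g x).

Definition proper_subset H : Prop := exists x, ~ H x.

Definition full_frobenius_with B : Prop :=
  full_frobenius_complement B /\ proper_subset B.

Definition infinite_set H : Prop := ~ finite_set H.

Definition finite_index K H : Prop :=
  exists s : list G, forall x, H x -> exists c, In c s /\ K (x * c^-1).

Definition connected_subgroup H : Prop :=
  forall K, definable_subgroup K -> (forall x, K x -> H x) ->
    finite_index K H -> forall x, H x -> K x.

Definition connected_group : Prop := connected_subgroup (fun _ => True).

Definition normal_subgroup N : Prop :=
  is_subgroup N /\ forall g x, N x -> N (g^-1 * x * g).

Definition nontrivial H : Prop := exists x, H x /\ x <> 1.

Definition product_is_whole N B : Prop :=
  forall x, exists n b, N n /\ B b /\ x = n * b.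

End GroupNotions.

From HB Require Import structures.
From Stdlib Require Import List FinFun.
From mathcomp Require Import all_boot boolp.

Set Implicit Arguments.
Unset Strict Implicit.
Unset Printing Implicit Defensive.

Section GroupAxioms.
Variable G : fMR_group.

Lemma gmulgV (x : G) : gmul x (ginv x) = gone G.
Proof.
have idem : gmul (gmul x (ginv x)) (gmul x (ginv x)) = gmul x (ginv x).
  by rewrite -gmulA (gmulA (ginv x)) gmulV gmul1.
by rewrite -[LHS]gmul1 -(gmulV (gmul x (ginv x))) -gmulA idem.
Qed.

Lemma gmulg1 (x : G) : gmul x (gone G) = x.
Proof. by rewrite -(gmulV x) gmulA gmulgV gmul1. Qed.

End GroupAxioms.

HB.instance Definition _ (G : fMR_group) := gen_eqMixin (carrier G).
HB.instance Definition _ (G : fMR_group) := gen_choiceMixin (carrier G).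
HB.instance Definition _ (G : fMR_group) :=
  isGroup.Build (carrier G) (@gmulA G) (@gmul1 G) (@gmulg1 G) (@gmulV G) (@gmulgV G).

Local Open Scope group_scope.

Section Subgroups.
Variable G : fMR_group.
Implicit Types (H : G -> Prop) (x y g : G).

Lemma conj_setE H g x : conj_set H g x = H (g * x * g^-1). Proof. by []. Qed.

Lemma subgroupP H : H 1 -> (forall x y, H x -> H y -> H (x * y)) ->
  (forall x, H x -> H x^-1) -> is_subgroup H.
Proof. by []. Qed.

Lemma subg1 H : is_subgroup H -> H 1. Proof. by case. Qed.

Lemma subgM H x y : is_subgroup H -> H x -> H y -> H (x * y).
Proof. by case=> _ [+ _]; apply. Qed.

Lemma subgV H x : is_subgroup H -> H x -> H x^-1.
Proof. by case=> _ [_]; apply. Qed.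

Lemma subgVr H x : is_subgroup H -> H x^-1 -> H x.
Proof. by move=> sH /(subgV sH); rewrite invgK. Qed.

Lemma subgD H x y : is_subgroup H -> H x -> H y -> H (x / y).
Proof. by move=> sH hx /(subgV sH); apply: subgM. Qed.

Lemma subg_conj H g : is_subgroup H -> is_subgroup (conj_set H g).
Proof.
move=> sH; apply: subgroupP => [|x y|x]; rewrite !conj_setE.
- by rewrite mulg1 mulgV; apply: subg1.
- have -> : g * (x * y) * g^-1 = g * x * g^-1 * (g * y * g^-1).
    by rewrite !mulgA mulgVK.
  exact: subgM.
- by move/(subgV sH); rewrite !invgM invgK mulgA.
Qed.

End Subgroups.

Definition ord_up n (i : 'I_n) : 'I_(n + 1) := lshift 1 i.
Definition ord_last n : 'I_(n + 1) := rshift n ord0.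

Lemma split_ord_up n (i : 'I_n) : fintype.split (ord_up i) = inl i.
Proof. exact: (unsplitK (inl _ i)). Qed.

Lemma split_ord_last n : fintype.split (ord_last n) = inr ord0.
Proof. exact: (unsplitK (inr _ ord0)). Qed.

Section Snoc.
Variable T : Type.

Definition snoc n (x : 'I_n -> T) (y : T) : 'I_(n + 1) -> T := tjoin x (fun _ => y).

Lemma snoc_up n (x : 'I_n -> T) y i : snoc x y (ord_up i) = x i.
Proof. by rewrite /snoc /tjoin split_ord_up. Qed.

Lemma snoc_last n (x : 'I_n -> T) y : snoc x y (ord_last n) = y.
Proof. by rewrite /snoc /tjoin split_ord_last. Qed.

Lemma snoc_upE n (x : 'I_n -> T) y : (fun i => snoc x y (ord_up i)) = x.
Proof. by apply: funext => i; rewrite snoc_up. Qed.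

Lemma tjoin_snoc n (x : 'I_n -> T) (y : 'I_1 -> T) : tjoin x y = snoc x (y ord0).
Proof.
apply: funext => i; rewrite /snoc /tjoin.
by case: (fintype.split i) => // k; rewrite (ord1 k).
Qed.

Lemma tuple1E (x : 'I_1 -> T) : x = (fun _ => x ord0).
Proof. by apply: funext => i; rewrite (ord1 i). Qed.

End Snoc.

Section Definability.
Variable G : fMR_group.
Local Notation Df := (@Def G).

Lemma Def_exists n (A : ('I_(n + 1) -> G) -> Prop) :
  Df A -> Df (fun x : 'I_n -> G => exists y, A (snoc x y)).
Proof.
move=> dA; apply: Def_ext (Def_proj dA) _ => x; rewrite /fibre.
split=> [[y]|[y]]; rewrite ?tjoin_snoc => Ay; first by exists (y ord0).
by exists (fun _ => y); rewrite tjoin_snoc.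
Qed.

Lemma Def_or n (A A' : ('I_n -> G) -> Prop) : Df A -> Df A' -> Df (fun x => A x \/ A' x).
Proof.
move=> dA dA'; apply: Def_ext (Def_compl (Def_inter (Def_compl dA) (Def_compl dA'))) _ => x.
split=> [h|[a|a] [] //]; apply: contrapT => nA.
by apply: h; split=> a; apply: nA; [left|right].
Qed.

Lemma Def_prop n (P : Prop) : Df (fun _ : 'I_n -> G => P).
Proof.
case: (pselect P) => p; first by apply: Def_ext (Def_true G n) _.
by apply: Def_ext (Def_compl (Def_true G n)) _.
Qed.

Lemma Def_bigcup n (l : list (('I_n -> G) -> Prop)) :
  (forall A, In A l -> Df A) -> Df (fun x => exists A, In A l /\ A x).
Proof.
elim: l => [_|A l IHl dl].
  by apply: Def_ext (Def_prop n False) _ => x; split=> // -[? [[]]].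
have dA := dl A (or_introl erefl); have dl' := IHl (fun B lB => dl B (or_intror lB)).
apply: Def_ext (Def_or dA dl') _ => x.
split=> [[Ax|[B [lB Bx]]]|[B [[<-|lB] Bx]]]; [exists A|exists B|left|right; exists B] => //.
- by split=> //; left.
- by split=> //; right.
Qed.

Lemma definable_bigcup (l : list (G -> Prop)) :
  (forall A, In A l -> definable A) -> definable (fun x => exists A, In A l /\ A x).
Proof.
move=> dl; pose lift (A : G -> Prop) (y : 'I_1 -> G) := A (y ord0).
apply: Def_ext (@Def_bigcup 1 (List.map lift l) _) _ => [A|y].
  by rewrite in_map_iff => -[B [<- /dl]].
split=> -[A [lA Ay]]; last by exists (lift A); split=> //; apply: in_map.
by move: lA Ay; rewrite in_map_iff => -[B [<- lB]] By; exists B.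
Qed.

Definition ord_snoc n k (s : 'I_n -> 'I_k) (j : 'I_k) : 'I_(n + 1) -> 'I_k :=
  fun i => if fintype.split i is inl a then s a else j.

Definition def_term n (t : ('I_n -> G) -> G) :=
  Df (fun z : 'I_(n + 1) -> G => t (fun i => z (ord_up i)) = z (ord_last n)).

Lemma def_term_at n (t : ('I_n -> G) -> G) k (s : 'I_n -> 'I_k) (j : 'I_k) :
  def_term t -> Df (fun w : 'I_k -> G => t (fun i => w (s i)) = w j).
Proof.
move=> dt; apply: Def_ext (Def_sub (ord_snoc s j) dt) _ => w.
by rewrite /ord_snoc split_ord_last; under eq_fun do rewrite split_ord_up.
Qed.

Lemma def_term_sub n k (s : 'I_n -> 'I_k) (t : ('I_n -> G) -> G) :
  def_term t -> def_term (fun w : 'I_k -> G => t (fun i => w (s i))).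
Proof. exact: def_term_at. Qed.

Lemma def_term_var n (i : 'I_n) : def_term (fun x => x i).
Proof. exact: Def_eq. Qed.

Lemma def_term_const n (c : G) : def_term (fun _ : 'I_n -> G => c).
Proof. by apply: Def_ext (Def_const (ord_last n) c) _ => z; split=> ->. Qed.

Lemma def_term_mul n (t1 t2 : ('I_n -> G) -> G) :
  def_term t1 -> def_term t2 -> def_term (fun x => t1 x * t2 x).
Proof.
move=> d1 d2; set m := n + 1.
pose x (w : 'I_(m + 1 + 1) -> G) i := w (ord_up (ord_up (ord_up i))).
pose z (w : 'I_(m + 1 + 1) -> G) := w (ord_up (ord_up (ord_last n))).
pose u (w : 'I_(m + 1 + 1) -> G) := w (ord_up (ord_last m)).
pose v (w : 'I_(m + 1 + 1) -> G) := w (ord_last (m + 1)).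
have D : Df (fun w => t1 (x w) = u w /\ t2 (x w) = v w /\ u w * v w = z w).
  by do 2![apply: Def_inter; first exact: def_term_at]; apply: Def_mul.
apply: Def_ext (Def_exists (Def_exists D)) _ => w.
have E a b : x (snoc (snoc w a) b) = fun i => w (ord_up i).
  by apply: funext => i; rewrite /x !snoc_up.
split=> [[a [b]]|e]; last exists (t1 (fun i => w (ord_up i))), (t2 (fun i => w (ord_up i))).
  by rewrite E /u /v /z !snoc_up !snoc_last => -[<- [<-]].
by rewrite E /u /v /z !snoc_up !snoc_last.
Qed.

Lemma def_term_eq1 n (t : ('I_n -> G) -> G) : def_term t -> Df (fun x => t x = 1).
Proof.
move=> dt; have D := Def_inter dt (Def_const (ord_last n) 1).
apply: Def_ext (Def_exists D) _ => x.
by under eq_exists do rewrite snoc_upE snoc_last; split=> [[y [-> ->]]|e] //; exists 1.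
Qed.

Lemma def_term_inv n (t : ('I_n -> G) -> G) : def_term t -> def_term (fun x => (t x)^-1).
Proof.
move=> dt; have dt' := def_term_sub (@ord_up n) dt.
apply: Def_ext (def_term_eq1 (def_term_mul dt' (def_term_var (ord_last n)))) _ => z.
by split=> [/mulg1_eq|<-]; last exact: mulgV.
Qed.

Lemma def_term_eq n (t1 t2 : ('I_n -> G) -> G) :
  def_term t1 -> def_term t2 -> Df (fun x => t1 x = t2 x).
Proof.
move=> d1 d2; apply: Def_ext (def_term_eq1 (def_term_mul d1 (def_term_inv d2))) _ => x.
by split=> [/divg1_eq|->]; last exact: mulgV.
Qed.

Lemma definable_at n (P : G -> Prop) (i : 'I_n) : definable P -> Df (fun x => P (x i)).
Proof. exact: (Def_sub (fun _ : 'I_1 => i)). Qed.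

Lemma definable_comp n (P : G -> Prop) (t : ('I_n -> G) -> G) :
  definable P -> def_term t -> Df (fun x => P (t x)).
Proof.
move=> dP dt; have D := Def_inter dt (definable_at (ord_last n) dP).
apply: Def_ext (Def_exists D) _ => x.
by under eq_exists do rewrite snoc_upE snoc_last; split=> [[y [-> //]]|p]; exists (t x).
Qed.

Lemma definable_pred1 (c : G) : definable (fun x => x = c).
Proof. exact: (Def_const ord0 c). Qed.

Definition definable2 (R : G -> G -> Prop) :=
  Df (fun z : 'I_(1 + 1) -> G => R (z (ord_up ord0)) (z (ord_last 1))).

Lemma definable2_at (R : G -> G -> Prop) k (i j : 'I_k) :
  definable2 R -> Df (fun w => R (w i) (w j)).
Proof.
move=> dR; apply: Def_ext (Def_sub (fun a => if fintype.split a is inl _ then i else j) dR) _.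
by move=> w; rewrite split_ord_up split_ord_last.
Qed.

Lemma definable2_swap R : definable2 R -> definable2 (fun a b => R b a).
Proof. exact: definable2_at. Qed.

Lemma definable2_dom R : definable2 R -> definable (fun x => exists y, R x y).
Proof.
move=> dR; apply: Def_ext (Def_exists dR) _ => x.
by under eq_exists do rewrite snoc_up snoc_last.
Qed.

Lemma definable2_codom R : definable2 R -> definable (fun y => exists x, R x y).
Proof. by move/definable2_swap/definable2_dom. Qed.

End Definability.

Ltac def_term :=
  repeat first [apply: def_term_mul | apply: def_term_inv | apply: def_term_var
               | apply: def_term_const].

Section Sequences.

Lemma pigeonhole (T : Type) (s : list T) (f : nat -> T) :
  (forall k, In (f k) s) -> exists k l, k <> l /\ f k = f l.
Proof.
move=> fs; apply: contrapT => noncollision.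
have inj : Injective f.
  by move=> k l fkl; apply: contrapT => kl; apply: noncollision; exists k, l.
have nd := Injective_map_NoDup inj (seq_NoDup (length s).+1 0).
have sub : incl (List.map f (List.seq 0 (length s).+1)) s.
  by move=> y; rewrite in_map_iff => -[k [<- _]].
by move: (NoDup_incl_length nd sub); rewrite length_map length_seq => /leP; rewrite ltnn.
Qed.

Lemma disjoint_of_lt (U : Type) (Z : nat -> U -> Prop) :
  (forall k l x, k < l -> Z k x -> Z l x -> False) ->
  forall k l x, k <> l -> Z k x -> Z l x -> False.
Proof.
move=> disj k l x /eqP; rewrite neq_ltn => /orP[] lt zk zl; first exact: disj lt zk zl.
exact: disj lt zl zk.
Qed.

Lemma avoiding_sequence (T : Type) (P : T -> Prop) (R : T -> T -> Prop) :
  (forall s : list T, exists x, P x /\ forall c, In c s -> R x c) ->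
  exists f : nat -> T, (forall k, P (f k)) /\ (forall i j, i < j -> R (f j) (f i)).
Proof.
move=> /choice[pick pickP].
pose L := fix L k := if k is k'.+1 then pick (L k') :: L k' else nil.
exists (fun k => pick (L k)); split=> [k|i j]; first exact: (pickP (L k)).1.
have inL : i < j -> In (pick (L i)) (L j).
  elim: j => // j IHj; rewrite ltnS leq_eqVlt => /orP[/eqP ->|lt]; first by left.
  by right; apply: IHj.
by move/inL; apply: (pickP (L j)).2.
Qed.

Lemma unbounded_injection (P : nat -> Prop) :
  (forall N, exists k, N <= k /\ P k) ->
  exists s : nat -> nat, (forall i, P (s i)) /\ (forall i j, i <> j -> s i <> s j).
Proof.
move=> unb.
have [f [fP f_incr]] : exists f : nat -> nat, (forall k, P (f k)) /\
    (forall i j, i < j -> f i < f j).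
  apply: (avoiding_sequence (R := fun x c => c < x)) => s.
  have [k [le pk]] := unb (foldr maxn 0 s).+1.
  exists k; split=> // c inc; apply: leq_trans le; rewrite ltnS.
  elim: s inc => // x s IHs /= [->|/IHs le]; first exact: leq_maxl.
  exact: leq_trans le (leq_maxr _ _).
exists f; split=> // i j /eqP; rewrite neq_ltn => /orP[] /f_incr + e;
  by rewrite e ltnn.
Qed.

Lemma disjoint_family_of_descent (U : Type) (D E : (U -> Prop) -> Prop) X0 :
  D X0 ->
  (forall X, D X -> exists Y Z, [/\ D Y, E Z, (forall x, Y x -> X x),
                                   (forall x, Z x -> X x) & (forall x, Z x -> ~ Y x)]) ->
  exists Z : nat -> U -> Prop,
    (forall k, E (Z k)) /\ (forall k l x, k <> l -> Z k x -> Z l x -> False).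
Proof.
move=> DX0 step.
have /choice[f fP] : forall X, exists YZ : (U -> Prop) * (U -> Prop), D X ->
    [/\ D YZ.1, E YZ.2, (forall x, YZ.1 x -> X x),
        (forall x, YZ.2 x -> X x) & (forall x, YZ.2 x -> ~ YZ.1 x)].
  move=> X; case: (pselect (D X)) => [/step[Y [Z sYZ]]|nDX]; first by exists (Y, Z).
  by exists (X, X).
pose X i := iter i (fun X => (f X).1) X0.
have DX i : D (X i) by elim: i => //= i IHi; case: (fP _ IHi).
have X_decr i j x : i <= j -> X j x -> X i x.
  elim: j => [|j IHj]; first by rewrite leqn0 => /eqP->.
  rewrite leq_eqVlt => /orP[/eqP-> //|]; rewrite ltnS => le /=.
  by case: (fP _ (DX j)) => _ _ sub _ _ /sub; apply: IHj.
exists (fun i => (f (X i)).2); split=> [i|]; first by case: (fP _ (DX i)).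
apply: disjoint_of_lt => i j x lt zi zj.
have Xj : X j x by case: (fP _ (DX j)) => _ _ _ + _; apply.
by case: (fP _ (DX i)) => _ _ _ _ /(_ x zi); apply; apply: (X_decr i.+1 j x lt Xj).
Qed.

End Sequences.

Section Rank.
Variable G : fMR_group.
Local Notation Df := (@Def G).

Lemma rk_mono n (A A' : ('I_n -> G) -> Prop) : Df A -> Df A' ->
  (exists x, A x) -> (forall x, A x -> A' x) -> rk A <= rk A'.
Proof.
move=> dA dA' [x Ax] AA'; case eA: (rk A) => [|m] //.
have /(rk_def dA (ex_intro _ x Ax))[Z [famZ disjZ]] : m.+1 <= rk A by rewrite eA.
apply/(rk_def dA' (ex_intro _ x (AA' x Ax))); exists Z; split=> // k.
have [dZ [neZ [ZA rkZ]]] := famZ k.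
by split=> //; split=> //; split=> // y /ZA /AA'.
Qed.

Lemma rk_union n m (A A' U : ('I_n -> G) -> Prop) : Df A -> Df A' -> Df U ->
  (forall x, U x -> A x \/ A' x) -> (exists x, U x) -> m <= rk U ->
  ((exists x, A x) /\ m <= rk A) \/ ((exists x, A' x) /\ m <= rk A').
Proof.
elim: m A A' U => [|m IHm] A A' U dA dA' dU UAA' [x Ux] rkU.
  by case: (UAA' x Ux) => ?; [left|right]; split=> //; exists x.
move: rkU => /(rk_def dU (ex_intro _ x Ux))[Z [famZ disjZ]].
pose big (C : ('I_n -> G) -> Prop) k :=
  (exists y, Z k y /\ C y) /\ m <= rk (fun y => Z k y /\ C y).
have ZAA' k : big A k \/ big A' k.
  have [dZ [neZ [ZU rkZ]]] := famZ k.
  apply: IHm rkZ => //; try exact: Def_inter.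
  by move=> y Zy; case: (UAA' y (ZU y Zy)) => ?; [left|right].
have bigP C : Df C -> (forall N, exists k, N <= k /\ big C k) ->
    (exists x, C x) /\ m.+1 <= rk C.
  move=> dC /unbounded_injection[s [sC s_inj]].
  have [[y [_ Cy]] _] := sC 0; split; first by exists y.
  apply/(rk_def dC (ex_intro _ y Cy)); exists (fun i y => Z (s i) y /\ C y).
  split=> [i|k l z kl [Zk _] [Zl _]]; last exact: disjZ (s_inj _ _ kl) Zk Zl.
  have [[neZ rkZ] [dZ _]] := (sC i, famZ (s i)).
  by do !split=> //; [exact: Def_inter | move=> z []].
case: (pselect (forall N, exists k, N <= k /\ big A k)) => [unbA|bndA].
  by left; apply: bigP.
right; apply: bigP => // N.
have [N0 N0A] : exists N0, forall k, N0 <= k -> ~ big A k.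
  apply: contrapT => unbA; apply: bndA => N1; apply: contrapT => noA.
  by apply: unbA; exists N1 => k le Ak; apply: noA; exists k.
exists (maxn N N0); split; first exact: leq_maxl.
by case: (ZAA' (maxn N N0)) => // /(N0A _ (leq_maxr _ _)).
Qed.

Lemma rk_union_list n m (U : ('I_n -> G) -> Prop) (l : list (('I_n -> G) -> Prop)) :
  Df U -> (forall A, In A l -> Df A) -> (forall x, U x -> exists A, In A l /\ A x) ->
  (exists x, U x) -> m <= rk U ->
  exists A, In A l /\ (exists x, A x) /\ m <= rk A.
Proof.
elim: l U => [|A l IHl] U dU dl Ul neU rkU.
  by case: neU => x /Ul[? [[]]].
pose V x := exists B, In B l /\ B x.
have dV : Df V by apply: Def_bigcup => B lB; apply: dl; right.
have UAV x : U x -> A x \/ V x by case/Ul=> B [[<-|lB] Bx]; [left|right; exists B].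
case: (rk_union (dl A (or_introl erefl)) dV dU UAV neU rkU) => [[neA rkA]|[neV rkV]].
  by exists A; split=> //; left.
have [B [lB rkB]] := IHl V dV (fun B i => dl B (or_intror i)) (fun x => id) neV rkV.
by exists B; split=> //; right.
Qed.

End Rank.

Section UnaryRank.
Variable G : fMR_group.
Local Notation Df := (@Def G).
Implicit Types (P Q : G -> Prop) (R : G -> G -> Prop).

Definition rk1 P := rk (fun x : 'I_1 -> G => P (x ord0)).

Lemma rk1_ext P Q : (forall x, P x <-> Q x) -> rk1 P = rk1 Q.
Proof. by move=> /predeqP ->. Qed.

Lemma rk1_mono P Q : definable P -> definable Q -> (exists x, P x) ->
  (forall x, P x -> Q x) -> rk1 P <= rk1 Q.
Proof. by move=> dP dQ [x Px] PQ; apply: rk_mono => // [|y /PQ]; first by exists (fun _ => x). Qed.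

Lemma rk1_gtP P m : definable P -> (exists x, P x) ->
  m < rk1 P <-> exists Z : nat -> G -> Prop,
    (forall k, [/\ definable (Z k), exists x, Z k x, (forall x, Z k x -> P x) & m <= rk1 (Z k)]) /\
    (forall k l x, k <> l -> Z k x -> Z l x -> False).
Proof.
move=> dP [x Px]; rewrite (rk_def dP (ex_intro _ (fun _ => x) Px)); split.
  case=> Z [famZ disjZ]; exists (fun k y => Z k (fun _ => y)); split=> [k|k l y kl]; last exact: disjZ.
  have [dZ [[z Zz] [ZP rkZ]]] := famZ k; have EZ : Z k = fun y => Z k (fun _ => y ord0).
    by apply: funext => y; rewrite -tuple1E.
  split; [by rewrite /definable -EZ | exists (z ord0); rewrite -tuple1E // | | by rewrite /rk1 -EZ].
  by move=> y /ZP.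
case=> Z [famZ disjZ]; exists (fun k y => Z k (y ord0)); split=> [k|k l y kl]; last exact: disjZ.
by have [dZ [z Zz] ZP rkZ] := famZ k; do !split=> //; [exists (fun _ => z) | move=> y /ZP].
Qed.

Lemma rk1_finite P : definable P -> (exists x, P x) -> finite_set P -> rk1 P = 0.
Proof.
move=> dP neP [s Ps]; apply/eqP; rewrite -leqn0 leqNgt; apply/negP.
case/(rk1_gtP 0 dP neP) => Z [famZ disjZ].
have /choice[f Zf] k : exists x, Z k x by case: (famZ k).
have [k [l [kl fkl]]] : exists k l, k <> l /\ f k = f l.
  by apply: (pigeonhole (s := s)) => k; apply: Ps; case: (famZ k) => _ _ ZP _; apply: ZP.
by apply: (disjZ k l (f k) kl (Zf k)); rewrite fkl.
Qed.

Lemma rk1_infinite P : definable P -> ~ finite_set P -> 0 < rk1 P.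
Proof.
move=> dP infP.
have [f [fP f_new]] : exists f : nat -> G, (forall k, P (f k)) /\ (forall i j, i < j -> f j <> f i).
  apply: (avoiding_sequence (R := fun x c => x <> c)) => s; apply: contrapT => nx; apply: infP; exists s => y Py.
  apply: contrapT => ns; apply: nx; exists y; split=> // c sc e.
  by apply: ns; rewrite e.
apply/(rk1_gtP 0 dP (ex_intro _ (f 0) (fP 0))); exists (fun k y => y = f k).
split=> [k|]; first by split=> //; [exact: definable_pred1 | exists (f k) | move=> y ->].
by apply: disjoint_of_lt => i j y lt -> /esym; apply: f_new.
Qed.

Lemma rk1_eq0_finite P : definable P -> rk1 P = 0 -> finite_set P.
Proof. by move=> dP e; apply: contrapT => /(rk1_infinite dP); rewrite e. Qed.

Lemma rk1_pred1 (c : G) : rk1 (fun x => x = c) = 0.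
Proof.
apply: rk1_finite; [exact: definable_pred1 | by exists c | by exists (c :: nil) => y ->; left].
Qed.

Lemma rk1_union P Q U m : definable P -> definable Q -> definable U ->
  (forall x, U x -> P x \/ Q x) -> (exists x, U x) -> m <= rk1 U ->
  ((exists x, P x) /\ m <= rk1 P) \/ ((exists x, Q x) /\ m <= rk1 Q).
Proof.
move=> dP dQ dU UPQ [x Ux] rkU.
have [[[y Py] rkP]|[[y Qy] rkQ]] :=
  rk_union dP dQ dU (fun y => UPQ (y ord0)) (ex_intro _ (fun _ => x) Ux) rkU.
  by left; split=> //; exists (y ord0).
by right; split=> //; exists (y ord0).
Qed.

Lemma rk1_setD1 P (a : G) : definable P -> (exists x, P x /\ x <> a) ->
  rk1 (fun x => P x /\ x <> a) = rk1 P.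
Proof.
move=> dP [x [Px xa]]; have dPa : definable (fun x => P x /\ x <> a).
  exact: Def_inter dP (Def_compl (definable_pred1 a)).
apply/eqP; rewrite eqn_leq rk1_mono => [||||y []] //; last by exists x.
have PPa y : P y -> (P y /\ y <> a) \/ y = a by move=> Py; case: (pselect (y = a)); [right | left].
case: (rk1_union dPa (definable_pred1 a) dP PPa (ex_intro _ x Px) (leqnn _)) => [[_ //]|[_]].
by rewrite rk1_pred1 leqn0 => /eqP ->.
Qed.

Lemma rk1_union_list m U (l : list (G -> Prop)) :
  definable U -> (forall A, In A l -> definable A) ->
  (forall x, U x -> exists A, In A l /\ A x) -> (exists x, U x) -> m <= rk1 U ->
  exists A, In A l /\ (exists x, A x) /\ m <= rk1 A.
Proof.
move=> dU dl Ul [x Ux] rkU.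
pose lift (A : G -> Prop) (y : 'I_1 -> G) := A (y ord0).
have dl' : forall A, In A (List.map lift l) -> Df A.
  by move=> A; rewrite in_map_iff => -[B [<- /dl]].
have Ul' y : U (y ord0) -> exists A, In A (List.map lift l) /\ A y.
  by case/Ul=> A [lA Ay]; exists (lift A); split=> //; apply: in_map.
have [A' [lA' [[y Ay] rkA]]] := rk_union_list dU dl' Ul' (ex_intro _ (fun _ => x) Ux) rkU.
move: lA' Ay rkA; rewrite in_map_iff => -[A [<- lA]] Ay rkA.
by exists A; split=> //; split=> //; exists (y ord0).
Qed.

Lemma no_full_rank_disjoint_family P (Z : nat -> G -> Prop) :
  definable P -> (exists x, P x) ->
  (forall k, [/\ definable (Z k), exists x, Z k x, (forall x, Z k x -> P x) & rk1 P <= rk1 (Z k)]) ->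
  ~ (forall k l x, k <> l -> Z k x -> Z l x -> False).
Proof.
move=> dP neP famZ disjZ.
by have /(rk1_gtP _ dP neP) : exists Z, _ /\ _ := ex_intro _ Z (conj famZ disjZ); rewrite ltnn.
Qed.

Definition rk2 R := rk (fun z : 'I_(1 + 1) -> G => R (z (ord_up ord0)) (z (ord_last 1))).

Definition pair2 (a b : G) : 'I_(1 + 1) -> G := fun i => if fintype.split i is inl _ then a else b.

Lemma pair2E (a b : G) : pair2 a b (ord_up ord0) = a /\ pair2 a b (ord_last 1) = b.
Proof. by rewrite /pair2 split_ord_up split_ord_last. Qed.

Lemma rk_perm_le n (s : 'I_n -> 'I_n) : involutive s ->
  forall m (A : ('I_n -> G) -> Prop), Df A -> (exists x, A x) ->
  m <= rk A -> m <= rk (fun x => A (fun i => x (s i))).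
Proof.
move=> sK; have sKE (x : 'I_n -> G) : (fun i => x (s (s i))) = x by apply: funext => i; rewrite sK.
elim=> [//|m IHm] A dA [x Ax] /(rk_def dA (ex_intro _ x Ax))[Z [famZ disjZ]].
have neAs : exists y, A (fun i => y (s i)) by exists (fun i => x (s i)); rewrite sKE.
apply/(rk_def (Def_sub s dA) neAs); exists (fun k y => Z k (fun i => y (s i))).
split=> [k|k l y]; last exact: disjZ.
have [dZ [[z Zz] [ZA rkZ]]] := famZ k.
split; first exact: Def_sub.
split; first by exists (fun i => z (s i)); rewrite sKE.
by split=> [y /ZA //|]; apply: IHm => //; exists z.
Qed.

Lemma rk2_swap R : definable2 R -> (exists x y, R x y) -> rk2 (fun a b => R b a) = rk2 R.
Proof.
move=> dR [x [y Rxy]].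
pose sw (i : 'I_(1 + 1)) := if fintype.split i is inl _ then ord_last 1 else ord_up ord0.
have swK : involutive sw.
  by move=> i; case: (split_ordP i) => k ->; rewrite (ord1 k) /sw ?split_ord_up ?split_ord_last
    ?(unsplitK (inl _ ord0)) ?(unsplitK (inr _ ord0)).
have swU : sw (ord_up ord0) = ord_last 1 by rewrite /sw split_ord_up.
have swL : sw (ord_last 1) = ord_up ord0 by rewrite /sw split_ord_last.
have ne (A : G -> G -> Prop) a b :
    A a b -> exists z : 'I_(1 + 1) -> G, A (z (ord_up ord0)) (z (ord_last 1)).
  by move=> Aab; exists (pair2 a b); case: (pair2E a b) => -> ->.
apply/eqP; rewrite eqn_leq /rk2; apply/andP; split.
  have := rk_perm_le swK (definable2_swap dR) (ne (fun a b => R b a) y x Rxy) (leqnn _).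
  by under [X in _ <= rk X]eq_fun do rewrite swU swL.
have := rk_perm_le swK dR (ne R x y Rxy) (leqnn _).
by under [X in _ <= rk X]eq_fun do rewrite swU swL.
Qed.

Lemma fibre_pair R (x : 'I_1 -> G) :
  fibre (fun z : 'I_(1 + 1) -> G => R (z (ord_up ord0)) (z (ord_last 1))) x =
  fun y => R (x ord0) (y ord0).
Proof. by apply: funext => y; rewrite /fibre tjoin_snoc snoc_up snoc_last. Qed.

Lemma rk2_fibration R k : definable2 R -> (exists x y, R x y) ->
  (forall x, (exists y, R x y) -> rk1 (R x) = k) ->
  rk2 R = rk1 (fun x => exists y, R x y) + k.
Proof.
move=> dR [x [y Rxy]] rkR.
have ne : exists z : 'I_(1 + 1) -> G, R (z (ord_up ord0)) (z (ord_last 1)).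
  by exists (pair2 x y); case: (pair2E x y) => -> ->.
rewrite /rk2 (rk_add (k := k) dR ne); last first.
  by move=> a; rewrite fibre_pair => -[b Rb]; apply: rkR; exists (b ord0).
congr (rk _ + _); apply/funext => a; apply/propext; rewrite fibre_pair.
by split=> -[b Rb]; [exists (b ord0) | exists (fun _ => b)].
Qed.

Lemma rk1_definable R k : definable2 R ->
  definable (fun x => (exists y, R x y) /\ rk1 (R x) = k).
Proof.
move=> dR; apply: Def_ext (rk_definable k dR) _ => a; rewrite fibre_pair.
by split=> -[[b Rb] e]; split=> //; [exists (b ord0) | exists (fun _ => b)].
Qed.

Lemma rk2_fibration_le R b : definable2 R -> (exists x y, R x y) ->
  (forall x y, R x y -> rk1 (R x) <= b) ->
  rk2 R <= rk1 (fun x => exists y, R x y) + b.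
Proof.
move=> dR [x0 [y0 Rxy0]] rkR.
pose Rk k x y := R x y /\ ((exists y, R x y) /\ rk1 (R x) = k).
have dRk k : definable2 (Rk k).
  exact: Def_inter dR (definable_at (ord_up ord0) (rk1_definable k dR)).
pose pairs (S : G -> G -> Prop) (z : 'I_(1 + 1) -> G) := S (z (ord_up ord0)) (z (ord_last 1)).
pose l := List.map (fun k => pairs (Rk k)) (List.seq 0 b.+1).
have dl A : In A l -> Df A by rewrite in_map_iff => -[k [<- _]]; apply: dRk.
have Rl z : pairs R z -> exists A, In A l /\ A z.
  move=> Rz; exists (pairs (Rk (rk1 (R (z (ord_up ord0)))))); split.
    apply/in_map_iff; exists (rk1 (R (z (ord_up ord0)))); split=> //.
    by rewrite in_seq /=; split; [apply/leP | apply/leP; rewrite ltnS; exact: rkR Rz].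
  by split=> //; split=> //; exists (z (ord_last 1)).
have neR : exists z, pairs R z by exists (pair2 x0 y0); rewrite /pairs; case: (pair2E x0 y0) => -> ->.
have [A [lA [[z Az] rkA]]] := rk_union_list dR dl Rl neR (leqnn _).
move: lA Az rkA; rewrite in_map_iff => -[k [<- lk]] Az rkA.
have kb : k <= b by move: lk; rewrite in_seq => -[_ /leP]; rewrite ?add0n ltnS.
apply: leq_trans rkA _; rewrite -/(rk2 (Rk k)) (rk2_fibration (k := k) (dRk k)).
- apply: leq_add kb; apply: rk1_mono; [exact: definable2_dom | exact: definable2_dom | |].
  + by exists (z (ord_up ord0)), (z (ord_last 1)).
  + by move=> x [y [Rxy _]]; exists y.
- by exists (z (ord_up ord0)), (z (ord_last 1)).
- move=> x [y [_ [_ <-]]]; apply: rk1_ext => y'.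
  by rewrite /Rk; split=> [[]|Rxy'] //; do !split=> //; exists y'.
Qed.

(* Counting the rank of the graph of R along both projections. *)
Lemma rk_double_count_le R a b : definable2 R -> (exists x y, R x y) ->
  (forall x, (exists y, R x y) -> rk1 (R x) = a) ->
  (forall x y, R x y -> rk1 (fun x' => R x' y) <= b) ->
  rk1 (fun x => exists y, R x y) + a <= rk1 (fun y => exists x, R x y) + b.
Proof.
move=> dR [x [y Rxy]] rkl rkr.
have neR : exists x y, R x y by exists x, y.
rewrite -(rk2_fibration dR neR rkl) -rk2_swap //.
exact: rk2_fibration_le (definable2_swap dR) (ex_intro _ y (ex_intro _ x Rxy)) (fun y x => rkr x y).
Qed.

Lemma rk_double_count R a b : definable2 R -> (exists x y, R x y) ->
  (forall x, (exists y, R x y) -> rk1 (R x) = a) ->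
  (forall y, (exists x, R x y) -> rk1 (fun x => R x y) = b) ->
  rk1 (fun x => exists y, R x y) + a = rk1 (fun y => exists x, R x y) + b.
Proof.
move=> dR neR rkl rkr; apply/eqP; rewrite eqn_leq.
rewrite (rk_double_count_le dR neR rkl) => [|x y Rxy]; last by rewrite rkr //; exists x.
have [x [y Rxy]] := neR.
apply: (@rk_double_count_le (fun a b => R b a)) => [||z|z z' Rz]; first exact: definable2_swap.
- by exists y, x.
- exact: rkr.
- by rewrite rkl //; exists z.
Qed.

Definition def_fun (f : G -> G) := def_term (fun x : 'I_1 -> G => f (x ord0)).

Lemma rk1_comp P (f g : G -> G) : definable P -> def_fun f -> cancel f g -> cancel g f ->
  (exists x, P x) -> rk1 (fun y => P (f y)) = rk1 P.
Proof.
move=> dP df fK gK [x Px].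
have dR : definable2 (fun a b => P b /\ b = f a).
  apply: Def_inter; first exact: definable_at.
  exact: def_term_eq (def_term_var _ _) (def_term_sub (fun _ => ord_up ord0) df).
have neR : exists a b, P b /\ b = f a by exists (g x), x; rewrite gK.
transitivity (rk1 (fun a => exists b, P b /\ b = f a)).
  by apply: rk1_ext => a; split=> [Pfa|[b [Pb <-]]] //; exists (f a).
rewrite -[LHS]addn0 (rk_double_count (a := 0) (b := 0) dR neR) ?addn0.
- by apply: rk1_ext => b; split=> [[a []]|Pb] //; exists (g b); rewrite gK.
- move=> a [b [Pb bfa]]; rewrite -(rk1_pred1 (f a)); apply: rk1_ext => b'.
  by split=> [[]|->] //; rewrite -bfa.
- move=> b [a [Pb bfa]]; rewrite -(rk1_pred1 a); apply: rk1_ext => a'.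
  by split=> [[_ e]|->] //; rewrite -(fK a') -e bfa fK.
Qed.

End UnaryRank.

Section DefinableSubgroups.
Variable G : fMR_group.
Implicit Types (P H K L : G -> Prop) (x y g c : G).
Local Notation dsub := (@definable_subgroup G).

Definition rcoset K c := fun x => K (x / c).

Lemma definable_conj P g : definable P -> definable (conj_set P g).
Proof. by move=> dP; apply: definable_comp dP _; def_term. Qed.

Lemma definable_rcoset P c : definable P -> definable (rcoset P c).
Proof. by move=> dP; apply: definable_comp dP _; def_term. Qed.

Lemma definable_ltr P g : definable P -> definable (fun y => P (g^-1 * y)).
Proof. by move=> dP; apply: definable_comp dP _; def_term. Qed.

Lemma rk1_conj P g : definable P -> (exists x, P x) -> rk1 (conj_set P g) = rk1 P.
Proof.
move=> dP neP; change (rk1 (fun y => P (g * y * g^-1)) = rk1 P).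
apply: (rk1_comp (g := fun y => g^-1 * y * g)) => //; first by rewrite /def_fun; def_term.
- by move=> y; rewrite mulgA mulKg mulgVK.
- by move=> y; rewrite mulgA mulVKg mulgK.
Qed.

Lemma rk1_rcoset P c : definable P -> (exists x, P x) -> rk1 (rcoset P c) = rk1 P.
Proof.
move=> dP neP; apply: (rk1_comp (g := fun y => y * c)) => //; first by rewrite /def_fun; def_term.
- by move=> y; exact: mulgVK.
- by move=> y; exact: mulgK.
Qed.

Lemma rk1_ltr P g : definable P -> (exists x, P x) -> rk1 (fun y => P (g^-1 * y)) = rk1 P.
Proof.
move=> dP neP; apply: (rk1_comp (g := fun y => g * y)) => //; first by rewrite /def_fun; def_term.
- by move=> y; exact: mulVKg.
- by move=> y; exact: mulKg.
Qed.

Lemma dsubT : dsub (fun _ => True).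
Proof. by split; [apply: subgroupP | exact: Def_true]. Qed.

Lemma dsubI H K : dsub H -> dsub K -> dsub (fun x => H x /\ K x).
Proof.
move=> [sH dH] [sK dK]; split; last exact: Def_inter.
by apply: subgroupP => [|x y [? ?] [? ?]|x [? ?]]; split; by [apply: subg1 | apply: subgM | apply: subgV].
Qed.

Lemma dsub_conj H g : dsub H -> dsub (conj_set H g).
Proof. by case=> sH dH; split; [exact: subg_conj | exact: definable_conj]. Qed.

Lemma rk1_rcoset_sub K c : dsub K -> rk1 (rcoset K c) = rk1 K.
Proof. by case=> sK dK; apply: rk1_rcoset => //; exists 1; apply: subg1. Qed.

Lemma mem_rcoset K c : is_subgroup K -> rcoset K c c.
Proof. by move=> sK; rewrite /rcoset mulgV; apply: subg1. Qed.

Lemma finite_index_of_list K H (s : list G) :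
  (forall x, H x -> exists c, In c s /\ K (x / c)) -> finite_index K H.
Proof. by exists s. Qed.

Lemma finite_index_rk1 K H : dsub K -> dsub H -> finite_index K H -> rk1 H <= rk1 K.
Proof.
move=> dK [sH dH] [s Hs].
have dl A : In A (List.map (rcoset K) s) -> definable A.
  by rewrite in_map_iff => -[c [<- _]]; apply: definable_rcoset; case: dK.
have Hl x : H x -> exists A, In A (List.map (rcoset K) s) /\ A x.
  by case/Hs=> c [sc Kxc]; exists (rcoset K c); split=> //; apply: in_map.
have [A [lA [_ rkA]]] := rk1_union_list dH dl Hl (ex_intro _ 1 (subg1 sH)) (leqnn _).
by move: lA rkA; rewrite in_map_iff => -[c [<- _]]; rewrite rk1_rcoset_sub.
Qed.

Lemma rk1_finite_index K H : dsub K -> dsub H -> (forall x, K x -> H x) ->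
  rk1 H <= rk1 K -> finite_index K H.
Proof.
move=> [sK dK] [sH dH] KH rkHK; apply: contrapT => nfi.
have [f [fH f_new]] : exists f : nat -> G, (forall k, H (f k)) /\
    (forall i j, i < j -> ~ K (f j / f i)).
  apply: (avoiding_sequence (R := fun x c => ~ K (x / c))) => s; apply: contrapT => nx; apply: nfi; exists s => x Hx.
  apply: contrapT => ns; apply: nx; exists x; split=> // c sc Kxc.
  by apply: ns; exists c.
apply: (no_full_rank_disjoint_family (Z := fun k => rcoset K (f k)) dH (ex_intro _ 1 (subg1 sH))).
  move=> k; split; [exact: definable_rcoset | by exists (f k); apply: mem_rcoset | |].
    by move=> y Ky; rewrite -(mulgVK (f k) y); apply: subgM (KH _ Ky) (fH k).
  by rewrite rk1_rcoset_sub.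
apply: disjoint_of_lt => i j y lt Ki Kj; apply: (f_new _ _ lt).
have -> : f j / f i = (y / f j)^-1 * (y / f i) by rewrite invgM invgK -mulgA mulKg.
exact: subgM (subgV sK Kj) Ki.
Qed.

Lemma finite_indexP K H : dsub K -> dsub H -> (forall x, K x -> H x) ->
  finite_index K H <-> rk1 K = rk1 H.
Proof.
move=> dK dH KH; split=> [fi|e]; last by apply: rk1_finite_index; rewrite ?e.
apply/eqP; rewrite eqn_leq (finite_index_rk1 dK dH fi) andbT.
by apply: rk1_mono KH; [case: dK | case: dH | exists 1; case: dK => /subg1].
Qed.

Lemma rk1_meet K L H : dsub K -> dsub L -> dsub H ->
  (forall x, K x -> H x) -> (forall x, L x -> H x) ->
  rk1 K = rk1 H -> rk1 L = rk1 H -> rk1 (fun x => K x /\ L x) = rk1 H.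
Proof.
move=> dK dL dH KH LH rkK rkL; have [[sK _] [sL _]] := (dK, dL).
have [s Hs] := rk1_finite_index dL dH LH (eq_leq (esym rkL)).
have /choice[h hP] : forall c, exists h, (exists x, K x /\ L (x / c)) -> K h /\ L (h / c).
  move=> c; case: (pselect (exists x, K x /\ L (x / c))) => [[x KLx]|nx]; first by exists x.
  by exists c.
have fi : finite_index (fun x => K x /\ L x) K.
  apply: (finite_index_of_list (s := List.map h s)) => x Kx; have [c [sc Lxc]] := Hs x (KH x Kx).
  have [Khc Lhc] := hP c (ex_intro _ x (conj Kx Lxc)).
  exists (h c); split; first exact: in_map.
  split; first exact: subgD.
  have -> : x / h c = (x / c) / (h c / c) by rewrite invgM invgK mulgA mulgVK.
  exact: subgD.
by rewrite -rkK; apply/(finite_indexP (dsubI dK dL) dK _).1 => // x [].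
Qed.

Lemma dsub_nontrivial H : dsub H -> 0 < rk1 H -> exists x, H x /\ x <> 1.
Proof.
move=> [sH dH] rkH; apply: contrapT => triv.
suff : rk1 H = 0 by move: rkH => /[swap] ->.
apply: rk1_finite => //; first by exists 1; apply: subg1.
exists (1 :: nil) => x Hx; left; apply: contrapT => x1; apply: triv.
by exists x; split=> // e; apply: x1.
Qed.

Lemma exists_connected_full H : dsub H ->
  exists H0, [/\ dsub H0, forall x, H0 x -> H x, rk1 H0 = rk1 H & connected_subgroup H0].
Proof.
move=> dH; apply: contrapT => noH0; have [sH defH] := dH.
pose D K := [/\ dsub K, forall x, K x -> H x & rk1 K = rk1 H].
pose E Z := [/\ definable Z, exists x, Z x, forall x, Z x -> H x & rk1 H <= rk1 Z].
have step K : D K -> exists Y Z, [/\ D Y, E Z, forall x, Y x -> K x,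
    forall x, Z x -> K x & forall x, Z x -> ~ Y x].
  case=> dK KH rkK; have [sK _] := dK.
  have [K' [dK' K'K fi [x [Kx nK'x]]]] : exists K', [/\ dsub K', forall x, K' x -> K x,
      finite_index K' K & exists x, K x /\ ~ K' x].
    apply: contrapT => nK'; apply: noH0; exists K; split=> // K' dK' K'K fi x Kx.
    by apply: contrapT => nx; apply: nK'; exists K'; split=> //; exists x.
  have rkK' : rk1 K' = rk1 H by rewrite -rkK; apply/(finite_indexP dK' dK K'K).
  have [sK' defK'] := dK'.
  exists K', (rcoset K' x); split=> //.
  - by split=> // y /K'K /KH.
  - split; [exact: definable_rcoset | by exists x; apply: mem_rcoset | |].
      by move=> y K'yx; apply: KH; rewrite -(mulgVK x y); apply: subgM (K'K _ K'yx) Kx.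
    by rewrite rk1_rcoset_sub // rkK'.
  - by move=> y K'yx; rewrite -(mulgVK x y); apply: subgM (K'K _ K'yx) Kx.
  - move=> y K'yx K'y; apply: nK'x; rewrite -(invgK x) -(mulKg y x^-1).
    exact: subgV sK' (subgM sK' (subgV sK' K'y) K'yx).
have DH : D H by split.
have [Z [EZ disjZ]] := disjoint_family_of_descent DH step.
apply: (no_full_rank_disjoint_family defH (ex_intro _ 1 (subg1 sH)) _ disjZ) => k.
by case: (EZ k).
Qed.

Lemma connected_full_sub H0 K : connected_subgroup H0 -> dsub H0 -> dsub K ->
  (forall x, K x -> H0 x) -> rk1 K = rk1 H0 -> forall x, H0 x -> K x.
Proof. by move=> cH0 dH0 dK KH0 rkK; apply: cH0 => //; apply/(finite_indexP dK dH0 KH0). Qed.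

Lemma connected_full_meet H0 K A : connected_subgroup H0 -> dsub H0 -> dsub K -> dsub A ->
  (forall x, H0 x -> A x) -> (forall x, K x -> A x) -> rk1 H0 = rk1 A -> rk1 K = rk1 A ->
  forall x, H0 x -> K x.
Proof.
move=> cH0 dH0 dK dA H0A KA rkH0 rkK x H0x.
have := @connected_full_sub H0 _ cH0 dH0 (dsubI dH0 dK) (fun y => @proj1 _ _) _ x H0x.
by case=> //; rewrite rkH0; apply: rk1_meet.
Qed.

End DefinableSubgroups.

Section GenericSets.
Variable G : fMR_group.
Implicit Types (P X Y Z : G -> Prop) (x y g h : G).
Local Notation dsub := (@definable_subgroup G).
Variable H : G -> Prop.
Hypotheses (dH : dsub H) (connH : connected_subgroup H).

Let sH : is_subgroup H := dH.1.
Let defH : definable H := dH.2.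

Definition generic X :=
  [/\ definable X, exists x, X x, forall x, X x -> H x & rk1 H <= rk1 X].

Lemma generic_rk X : generic X -> rk1 X = rk1 H.
Proof. by case=> dX neX XH rkX; apply/eqP; rewrite eqn_leq rkX andbT rk1_mono. Qed.

Lemma generic_sup X Y : generic X -> definable Y -> (forall x, X x -> Y x) ->
  (forall x, Y x -> H x) -> generic Y.
Proof.
case=> dX [x Xx] XH rkX dY XY YH; split=> //; first by exists x; apply: XY.
by apply: leq_trans rkX (rk1_mono _ _ _ XY) => //; exists x.
Qed.

Lemma no_generic_disjoint_family (Z : nat -> G -> Prop) : (forall k, generic (Z k)) ->
  ~ (forall k l x, k <> l -> Z k x -> Z l x -> False).
Proof.
move=> genZ; apply: no_full_rank_disjoint_family defH (ex_intro _ 1 (subg1 sH)) _ => k.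
by case: (genZ k).
Qed.

(* A generic set of Morley degree one. *)
Definition indecomposable X := generic X /\ forall Y1 Y2, generic Y1 -> generic Y2 ->
  (forall x, Y1 x -> X x) -> (forall x, Y2 x -> X x) -> exists x, Y1 x /\ Y2 x.

Lemma exists_indecomposable : exists X, indecomposable X.
Proof.
apply: contrapT => noX.
have genH : generic H by split=> //; exists 1; apply: subg1.
have step X : generic X -> exists Y Z, [/\ generic Y, generic Z, forall x, Y x -> X x,
    forall x, Z x -> X x & forall x, Z x -> ~ Y x].
  move=> genX; apply: contrapT => nYZ; apply: noX; exists X; split=> // Y Z gY gZ YX ZX.
  by apply: contrapT => nx; apply: nYZ; exists Z, Y; split=> // x Zx Yx; apply: nx; exists x.
have [Z [genZ disjZ]] := disjoint_family_of_descent genH step.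
exact: no_generic_disjoint_family genZ disjZ.
Qed.

Lemma indecomposable_meet X Y1 Y2 : indecomposable X -> generic Y1 -> generic Y2 ->
  (forall x, Y1 x -> X x) -> (forall x, Y2 x -> X x) -> generic (fun x => Y1 x /\ Y2 x).
Proof.
move=> [_ indX] gY1 gY2 Y1X Y2X; have [dY1 _ Y1H _] := gY1; have [dY2 neY2 Y2H rkY2] := gY2.
have dY2nY1 : definable (fun x => Y2 x /\ ~ Y1 x) by apply: Def_inter dY2 (Def_compl dY1).
have [[ne rk]|[ne rk]] := rk1_union (Def_inter dY1 dY2) dY2nY1 dY2
  (fun x Y2x => or_ind (fun Y1x => or_introl (conj Y1x Y2x)) (fun nY1x => or_intror (conj Y2x nY1x))
     (lem (Y1 x))) neY2 rkY2.
  by split=> // [|x [/Y1H]] //; exact: Def_inter.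
have gY : generic (fun x => Y2 x /\ ~ Y1 x) by split=> // x [/Y2H].
by have [x [Y1x [_ /(_ Y1x)]]] := indX _ _ gY1 gY Y1X (fun x Yx => Y2X x Yx.1).
Qed.

Definition ltrans g X := fun y => X (g^-1 * y).

Lemma generic_ltrans g X : H g -> generic X -> generic (ltrans g X).
Proof.
move=> Hg [dX [x Xx] XH rkX]; split; first exact: definable_ltr.
- by exists (g * x); rewrite /ltrans mulKg.
- by move=> y /XH Hy; rewrite -(mulVKg g y); apply: subgM.
- by rewrite /ltrans rk1_ltr //; exists x.
Qed.

Lemma indecomposable_ltrans g X : H g -> indecomposable X -> indecomposable (ltrans g X).
Proof.
move=> Hg [gX indX]; split=> [|Y1 Y2 gY1 gY2 Y1X Y2X]; first exact: generic_ltrans.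
have Hg' : H g^-1 by apply: subgV.
have back Y : (forall x, Y x -> ltrans g X x) -> forall x, ltrans g^-1 Y x -> X x.
  by move=> YX x /YX; rewrite /ltrans invgK mulKg.
have [x [Y1x Y2x]] := indX _ _ (generic_ltrans Hg' gY1) (generic_ltrans Hg' gY2) (back _ Y1X) (back _ Y2X).
by exists (g^-1^-1 * x).
Qed.

Lemma generic_cover X (l : list (G -> Prop)) : generic X ->
  (forall A, In A l -> definable A /\ forall x, A x -> H x) ->
  (forall x, X x -> exists A, In A l /\ A x) -> exists A, In A l /\ generic A.
Proof.
move=> [dX neX _ rkX] dl Xl.
have [A [lA [neA rkA]]] := rk1_union_list dX (fun A lA => (dl A lA).1) Xl neX rkX.
by exists A; split=> //; have [dA AH] := dl A lA; split.
Qed.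

Section Stabilizer.
Variable X0 : G -> Prop.
Hypothesis indX0 : indecomposable X0.

Let genX0 : generic X0 := indX0.1.
Let defX0 : definable X0. Proof. by case: genX0. Qed.
Let X0H : forall x, X0 x -> H x. Proof. by case: genX0. Qed.

Definition overlap g := fun y => ltrans g X0 y /\ X0 y.

(* The generic stabilizer of X0, written so as to be visibly definable. *)
Definition stab g := H g /\ ((exists y, overlap g y) /\ rk1 (overlap g) = rk1 H).

Lemma definable_overlap g : definable (overlap g).
Proof. exact: Def_inter (definable_ltr _ defX0) defX0. Qed.

Lemma stabP g : stab g <-> H g /\ generic (overlap g).
Proof.
split=> [[Hg [ne rk]]|[Hg gO]]; last by split=> //; split; [case: gO | exact: generic_rk].
by split=> //; split=> //; [exact: definable_overlap | move=> y [_ /X0H] | rewrite rk].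
Qed.

Lemma dsub_stab : dsub stab.
Proof.
split.
  apply: subgroupP => [|g h /stabP[Hg gOg] /stabP[Hh gOh]|g /stabP[Hg gOg]]; apply/stabP.
  - split; first exact: subg1.
    apply: generic_sup genX0 (definable_overlap 1) _ _ => [y X0y|y [_ /X0H //]].
    by rewrite /overlap /ltrans invg1 mul1g.
  - split; first exact: subgM.
    have gO' : generic (ltrans g (overlap h)) by apply: generic_ltrans.
    have sub1 y : ltrans g (overlap h) y -> ltrans g X0 y by case.
    have sub2 y : overlap g y -> ltrans g X0 y by case.
    have := indecomposable_meet (indecomposable_ltrans Hg indX0) gO' gOg sub1 sub2.
    move/generic_sup; apply=> [|y [[+ _] [_]]|y [_ /X0H]] //; first exact: definable_overlap.
    by rewrite /overlap /ltrans invgM -mulgA.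
  - split; first exact: subgV.
    apply: generic_sup (generic_ltrans (subgV sH Hg) gOg) (definable_overlap _) _ _ => [y|y [_ /X0H]] //.
    by rewrite /overlap /ltrans !invgK mulKg => -[].
apply: Def_inter defH (rk1_definable (rk1 H) _).
by apply: Def_inter (definable_comp defX0 _) (definable_at _ defX0); def_term.
Qed.

Lemma stab_of_meet a b : H a -> H b -> generic (fun y => X0 (a * y) /\ X0 (b * y)) -> stab (a / b).
Proof.
move=> Ha Hb gM; apply/stabP; split; first exact: subgD.
apply: (generic_sup (generic_ltrans Ha gM) (definable_overlap _)) => [y|y [_ /X0H //]].
by rewrite /ltrans /overlap /ltrans invgM invgK mulVKg -mulgA => -[].
Qed.

Lemma stab_full g : H g -> stab g.
Proof.
move=> Hg; suff fi : finite_index stab H by apply: (connH dsub_stab (fun g Sg => Sg.1) fi Hg).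
apply: contrapT => nfi.
have [f [fH f_new]] : exists f : nat -> G, (forall k, H (f k)) /\
    (forall i j, i < j -> ~ stab (f j / f i)).
  apply: (avoiding_sequence (R := fun x c => ~ stab (x / c))) => s.
  apply: contrapT => nx; apply: nfi; exists s => x Hx.
  apply: contrapT => ns; apply: nx; exists x; split=> // c sc Sxc.
  by apply: ns; exists c.
pose T i y := X0 (f i * y).
have dT i : definable (T i) by apply: definable_comp defX0 _; def_term.
have TH i y : T i y -> H y.
  by move/X0H => Hfy; rewrite -(mulKg (f i) y); apply: subgM (subgV sH (fH i)) Hfy.
have gT i : generic (T i).
  have := generic_ltrans (subgV sH (fH i)) genX0.
  by rewrite /ltrans invgK.
pose before j y := exists A, In A (List.map T (List.seq 0 j)) /\ A y.
pose D j y := T j y /\ ~ before j y.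
apply: (no_generic_disjoint_family (Z := D)) => [j|].
  pose l := D j :: List.map (fun i y => T j y /\ T i y) (List.seq 0 j).
  have dl A : In A l -> definable A /\ forall x, A x -> H x.
    move=> lA; case: (in_inv lA) => [<-|]; last by rewrite in_map_iff => -[i [<- _]]; split=> [|y [/TH]] //; exact: Def_inter (dT j) (dT i).
    split=> [|y [/TH]] //; apply: Def_inter (dT j) (Def_compl (definable_bigcup _)) => B.
    by rewrite in_map_iff => -[i [<- _]].
  have Tl y : T j y -> exists A, In A l /\ A y.
    move=> Tjy; case: (pselect (before j y)) => [[A [+ Ay]]|nb]; last by exists (D j); split=> //; left.
    rewrite in_map_iff => -[i [eA li]]; subst A.
    by exists (fun y => T j y /\ T i y); split=> //; right; apply/in_map_iff; exists i.
  have [A [lA gA]] := generic_cover (gT j) dl Tl; case: (in_inv lA) => [-> //|].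
  rewrite in_map_iff => -[i [eA]]; subst A; rewrite in_seq => -[_ /leP lt].
  by case: (f_new i j lt); apply: stab_of_meet.
apply: disjoint_of_lt => i j y lt [Tiy _] [_]; apply; exists (T i); split=> //.
by apply/in_map_iff; exists i; rewrite in_seq; split=> //; split; [apply/leP | apply/leP].
Qed.

End Stabilizer.

Lemma generic_translate_meet X0 Y : indecomposable X0 -> generic Y ->
  exists g, H g /\ generic (fun y => ltrans g X0 y /\ Y y).
Proof.
move=> [genX0 _] genY; apply: contrapT => noG.
have [dX0 [z0 X0z0] X0H _] := genX0; have [dY [y0 Yy0] YH _] := genY.
pose R x g := Y x /\ X0 (g^-1 * x).
have dR : definable2 R.
  apply: Def_inter (definable_at _ dY) (definable_comp dX0 _); def_term.
have neR : exists x g, R x g.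
  by exists y0, (y0 / z0); split=> //; rewrite invgM invgK -mulgA mulVg mulg1.
have Hg x g : R x g -> H g.
  case=> /YH Hx /X0H Hgx; rewrite (_ : g = x / (g^-1 * x)); first exact: subgD.
  by rewrite invgM invgK mulVKg.
have small x g : R x g -> rk1 (fun x' => R x' g) < rk1 H.
  move=> Rxg; rewrite ltnNge; apply/negP => big; apply: noG; exists g; split; first exact: Hg Rxg.
  split; [exact: Def_inter (definable_ltr _ dX0) dY | by exists x; case: Rxg | by move=> y [_ /YH] |].
  by apply: leq_trans big (eq_leq (rk1_ext _)) => y; rewrite /R /ltrans; split=> -[].
have rkH : 0 < rk1 H by have [x [g /small]] := neR; apply: leq_ltn_trans.
have count : rk1 (fun x => exists g, R x g) + rk1 H <=
    rk1 (fun g => exists x, R x g) + (rk1 H).-1.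
  apply: (@rk_double_count_le _ R (rk1 H) (rk1 H).-1 dR neR) => [x [g Rxg]|x g /small lt]; last by rewrite -ltnS prednK.
  transitivity (rk1 (fun g => X0 (g^-1 * x))).
    by case: Rxg => Yx _; apply: rk1_ext => g'; split=> [[]|].
  rewrite (rk1_comp (g := fun z => x / z)) ?(generic_rk genX0) //.
  - by rewrite /def_fun; def_term.
  - by move=> g'; rewrite invgM invgK mulVKg.
  - by move=> z; rewrite invgM invgK mulgVK.
  - by exists z0.
have rkdom : rk1 (fun x => exists g, R x g) = rk1 H.
  rewrite -(generic_rk genY); apply: rk1_ext => x; split=> [[g []] //|Yx].
  by exists (x / z0); split=> //; rewrite invgM invgK -mulgA mulVg mulg1.
have rkcod : rk1 (fun g => exists x, R x g) <= rk1 H.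
  apply: rk1_mono; [exact: definable2_codom dR | exact: defH | | by move=> g [x /Hg]].
  by have [x [g Rxg]] := neR; exists g, x.
have := leq_trans count (leq_add rkcod (leqnn _)).
by rewrite rkdom leq_add2l -ltnS prednK // ltnn.
Qed.

Lemma generic_meet X Y : generic X -> generic Y -> exists x, X x /\ Y x.
Proof.
move=> gX gY; have [X0 indX0] := exists_indecomposable.
have [g [Hg gXg]] := generic_translate_meet indX0 gX.
have [h [Hh gYh]] := generic_translate_meet indX0 gY.
have /(stabP indX0)[_ gO] := stab_full indX0 (subgM sH (subgV sH Hg) Hh).
have gGH : generic (fun y => ltrans g X0 y /\ ltrans h X0 y).
  have [dX0 _ X0H _] := indX0.1.
  apply: (generic_sup (generic_ltrans Hg gO)).
  - exact: Def_inter (definable_ltr _ dX0) (definable_ltr _ dX0).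
  - by move=> y; rewrite /ltrans /overlap /ltrans invgM invgK -mulgA mulVKg => -[].
  - by move=> y [/X0H Hy _]; rewrite -(mulVKg g y); apply: subgM.
have indXg := indecomposable_ltrans Hg indX0; have indXh := indecomposable_ltrans Hh indX0.
have gM := indecomposable_meet indXg gXg gGH (fun y => @proj1 _ _) (fun y => @proj1 _ _).
have [x [[[_ Xx] _] [_ Yx]]] := indXh.2 _ _ gM gYh (fun y M => M.2.2) (fun y => @proj1 _ _).
by exists x.
Qed.

End GenericSets.

Lemma finite_surj_inj (T : Type) (f : T -> T) : finite_set (fun _ : T => True) ->
  (forall y, exists x, f x = y) -> forall a b, f a = f b -> a = b.
Proof.
move=> [L inL] /choice[g fgK] a b fafb; apply: contrapT => ab.
have dec (x y : T) : {x = y} + {x <> y} by apply: pselect.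
have g_inj : Injective g by move=> y y' e; rewrite -(fgK y) -(fgK y') e.
have [c [cab cg]] : exists c, f c = f a /\ c <> g (f a).
  case: (pselect (a = g (f a))) => e; last by exists a.
  by exists b; split=> // e'; apply: ab; rewrite e e'.
have nd : NoDup (c :: List.map g (nodup dec L)).
  apply: NoDup_cons; last exact: Injective_map_NoDup g_inj (NoDup_nodup _ _).
  by rewrite in_map_iff => -[y [gyc _]]; apply: cg; rewrite -gyc -cab -gyc fgK.
have := NoDup_incl_length nd (fun x _ => proj2 (nodup_In dec _ _) (inL x I)).
by rewrite /= length_map => /leP; rewrite ltnn.
Qed.

Section FiniteGroupCover.
Variable G : fMR_group.

Lemma finite_group_not_covered (B : G -> Prop) : finite_set (fun _ : G => True) ->
  is_subgroup B -> (forall x, exists g, conj_set B g x) -> ~ proper_subset B.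
Proof.
move=> finG sB coverB [z nBz].
have /choice[pick pickP] : forall P : G -> Prop, exists t, (exists t, P t) -> P t.
  by move=> P; case: (pselect (exists t, P t)) => [[t Pt]|nP]; [exists t | exists 1].
pose rep x := pick (fun t => B (x / t)).
have repP x : B (x / rep x).
  by apply: (pickP (fun t => B (x / t))); exists x; rewrite mulgV; apply: subg1.
have rep_eq x y : B (x / y) -> rep x = rep y.
  move=> Bxy; rewrite /rep; congr pick; apply/funext => t; apply/propext.
  have -> : x / t = x / y * (y / t) by rewrite mulgA mulgVK.
  split=> [Bxt|]; last exact: subgM.
  by rewrite -(mulKg (x / y) (y / t)); apply: subgM (subgV sB Bxy) Bxt.
have repK x : rep (rep x) = rep x.
  by apply: rep_eq; have := subgV sB (repP x); rewrite invgM invgK.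
pose phi x := (rep x)^-1 * x.
have phi_surj y : exists x, phi x = y.
  have [g Bgy] := coverB y; pose t := rep g.
  have Btg : B (t / g) by have := subgV sB (repP g); rewrite invgM invgK.
  exists (t * y); rewrite /phi (_ : rep (t * y) = t) ?mulKg //.
  rewrite -[RHS]repK; apply: rep_eq.
  have -> : t * y / t = t / g * (g * y * g^-1) / (t / g) by rewrite invgM invgK !mulgA !mulgVK.
  by apply: subgD (subgM sB Btg Bgy) Btg.
have phi_rep x : phi (rep x) = 1 by rewrite /phi repK mulVg.
have rep1z : rep 1 = rep z by apply: (finite_surj_inj finG phi_surj); rewrite !phi_rep.
have Brep1 : B (rep 1) by apply: (subgVr sB); have := repP 1; rewrite mul1g.
apply: nBz; rewrite -(mulgVK (rep z) z); apply: subgM sB (repP z) _.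
by rewrite -rep1z.
Qed.

End FiniteGroupCover.

Section Conjugation.
Variable G : fMR_group.
Implicit Types (M P : G -> Prop) (x y g h c : G).
Local Notation dsub := (@definable_subgroup G).

Lemma conj_eq1 g x : g * x * g^-1 = 1 -> x = 1.
Proof. by move=> e; rewrite -[x](mulKg g) -[g * x](mulgVK g) e mul1g mulVg. Qed.

Lemma conj_mulg g h x : g * h * x * (g * h)^-1 = g * (h * x * h^-1) * g^-1.
Proof. by rewrite invgM !mulgA. Qed.

Lemma malnormal_conj_mem M x h : malnormal M -> M x -> x <> 1 -> M (h * x * h^-1) -> M h.
Proof. by move=> mM Mx x1 Mhx; apply: contrapT => nMh; apply: x1; apply: (mM h nMh x). Qed.

Lemma malnormal_conj M c : malnormal M -> malnormal (conj_set M c).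
Proof.
move=> mM h nMh x Mx Mhx; apply: (conj_eq1 (g := c)); apply: (mM (c * h * c^-1)) nMh _ Mx _.
rewrite conj_setE (_ : _ * _ * _ = c * (h * x * h^-1) * c^-1) //.
by rewrite !invgM invgK !mulgA !mulgVK.
Qed.

Definition conj_union (K D : G -> Prop) := fun y => exists g, K g /\ D (g * y * g^-1).

Lemma rk_conj_union M K D : is_subgroup M -> definable M -> malnormal M -> dsub K ->
  definable D -> (exists x, D x) -> (forall x, D x -> M x /\ K x) -> ~ D 1 ->
  rk1 K + rk1 D <= rk1 (conj_union K D) + rk1 (fun x => M x /\ K x).
Proof.
move=> sM dM mM dK dD [d Dd] DMK nD1; have [sK defK] := dK.
pose R g y := K g /\ D (g * y * g^-1).
have dR : definable2 R.
  by apply: Def_inter (definable_at _ defK) (definable_comp dD _); def_term.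
have neR : exists g y, R g y by exists 1, d; rewrite /R invg1 mulg1 mul1g; split=> //; apply: subg1.
have rkdom : rk1 (fun g => exists y, R g y) = rk1 K.
  apply: rk1_ext => g; split=> [[y []] //|Kg]; exists (g^-1 * d * g); split=> //.
  by rewrite !mulgA mulgV mul1g mulgK.
rewrite -rkdom; apply: (rk_double_count_le dR neR) => [g [y [Kg _]]|g y [Kg Dgy]].
  by rewrite -(rk1_conj g dD (ex_intro _ d Dd)); apply: rk1_ext => y'; split=> [[]|].
have dMK : dsub (fun x => M x /\ K x) := dsubI (conj sM dM) dK.
rewrite -(rk1_rcoset_sub g dMK); apply: rk1_mono.
- by apply: Def_inter defK (definable_comp dD _); def_term.
- exact: definable_rcoset dMK.2.
- by exists g.
move=> g' [Kg' Dg'y]; split; last exact: subgD.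
have [Mgy _] := DMK _ Dgy; apply: (malnormal_conj_mem mM Mgy) => [e|].
  by apply: nD1; rewrite -e.
suff -> : g' / g * (g * y * g^-1) * (g' / g)^-1 = g' * y * g'^-1 by case: (DMK _ Dg'y).
by rewrite invgM invgK !mulgA !mulgVK.
Qed.

Lemma conj_union_generic M K D : is_subgroup M -> definable M -> malnormal M -> dsub K ->
  definable D -> (exists x, D x) -> (forall x, D x -> M x /\ K x) -> ~ D 1 ->
  rk1 D = rk1 (fun x => M x /\ K x) -> generic K (conj_union K D).
Proof.
move=> sM dM mM dK dD [d Dd] DMK nD1 rkD; have [sK defK] := dK.
split.
- apply: (definable2_codom (R := fun g y => K g /\ D (g * y * g^-1))).
  by apply: Def_inter (definable_at _ defK) (definable_comp dD _); def_term.
- by exists d, 1; rewrite invg1 mulg1 mul1g; split=> //; apply: subg1.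
- move=> y [g [Kg /DMK[_ Kgy]]]; rewrite -[y](mulKg g) -[g * y](mulgVK g) mulgA.
  by apply: subgM sK (subgM sK (subgV sK Kg) Kgy) Kg.
by have := rk_conj_union sM dM mM dK dD (ex_intro _ d Dd) DMK nD1; rewrite rkD leq_add2r.
Qed.

Definition conj_class H c := fun y => exists g, H g /\ y = g * c * g^-1.
Definition centralizer H c := fun g => H g /\ commute g c.

Lemma commute_conjE g c : commute g c <-> g * c * g^-1 = c.
Proof. by split=> [gc|e]; [rewrite gc mulgK | rewrite /commute -{2}e mulgVK]. Qed.

Lemma definable2_conj_class H c : definable H ->
  definable2 (fun g y => H g /\ y = g * c * g^-1).
Proof. by move=> dH; apply: Def_inter (definable_at _ dH) (def_term_eq _ _); def_term. Qed.

Lemma definable_conj_class H c : definable H -> definable (conj_class H c).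
Proof. by move/(definable2_conj_class c)/definable2_codom. Qed.

Lemma rk1_conj_class H c : dsub H -> rk1 (conj_class H c) + rk1 (centralizer H c) = rk1 H.
Proof.
move=> [sH dH]; pose R g y := H g /\ y = g * c * g^-1.
have dR : definable2 R := definable2_conj_class c dH.
have neR : exists g y, R g y by exists 1, c; rewrite /R invg1 mulg1 mul1g; split=> //; apply: subg1.
have dC : definable (centralizer H c).
  by apply: Def_inter dH (def_term_eq _ _); def_term.
have rkl g : (exists y, R g y) -> rk1 (R g) = 0.
  case=> _ [Hg _]; rewrite -(rk1_pred1 (g * c * g^-1)); apply: rk1_ext => y.
  by split=> [[_ ->]|->].
have rkr y : (exists g, R g y) -> rk1 (fun g => R g y) = rk1 (centralizer H c).
  case=> g1 [Hg1 ey]; rewrite -(rk1_ltr g1 dC); last by exists 1; split; [apply: subg1 | exact: commute_sym (commute1 _)].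
  apply: rk1_ext => g; rewrite /centralizer commute_conjE conj_mulg invgK; split=> [[Hg eyg]|[Hk e]].
    split; first exact: subgM sH (subgV sH Hg1) Hg.
    by rewrite -eyg ey !mulgA mulVg mul1g mulgVK.
  split; first by rewrite -(mulVKg g1 g); apply: subgM sH Hg1 Hk.
  by rewrite ey -{1}e !mulgA mulgV mul1g mulgK.
have := rk_double_count dR neR rkl rkr; rewrite addn0 => <-.
by apply: rk1_ext => g; split=> [[y []] //|Hg]; exists (g * c * g^-1).
Qed.

End Conjugation.

Section SingleClass.
Variable G : fMR_group.
Implicit Types (x y g : G).

Lemma expg_conj g x n : (g * x * g^-1) ^+ n = g * x ^+ n * g^-1.
Proof.
elim: n => [|n IHn]; first by rewrite !expg0 mulg1 mulgV.
by rewrite !expgS IHn !mulgA mulgVK.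
Qed.

Lemma subgX (H : G -> Prop) x n : is_subgroup H -> H x -> H (x ^+ n).
Proof. by move=> sH Hx; elim: n => [|n IHn]; [apply: subg1 | rewrite expgS; apply: subgM]. Qed.

Variable G0 : G -> Prop.
Hypothesis sG0 : is_subgroup G0.
Hypothesis one_class : forall x y, G0 x -> x <> 1 -> G0 y -> y <> 1 ->
  exists g, G0 g /\ y = g * x * g^-1.
Hypothesis torsion : forall x, G0 x -> exists n, 0 < n /\ x ^+ n = 1.

Lemma single_class_exponent2 y : G0 y -> y * y = 1.
Proof.
move=> G0y; case: (pselect (y = 1)) => [->|y1]; first exact: mulg1.
have order_eq z w k : G0 z -> z <> 1 -> G0 w -> w <> 1 -> z ^+ k = 1 -> w ^+ k = 1.
  move=> G0z z1 G0w w1 zk; have [g [_ ->]] := one_class G0z z1 G0w w1.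
  by rewrite expg_conj zk mulg1 mulgV.
rewrite -expg2; have ex_n : exists n, (0 < n) && (y ^+ n == 1).
  by have [n [n_gt0 yn]] := torsion G0y; exists n; rewrite n_gt0 yn eqxx.
case: (ex_minnP ex_n) => n /andP[n_gt0 /eqP yn] n_min.
have [n_odd|/negbTE n_even] := boolP (odd n).
(* y is conjugate to its inverse by some g; g has odd order, so it is a power of g^2,
   which centralizes y. *)
  have yV1 : y^-1 <> 1 by move=> e; apply: y1; rewrite -[y]invgK e invg1.
  have [g [G0g yV]] := one_class G0y y1 (subgV sG0 G0y) yV1.
  suff /commute_conjE cgy : commute g y by rewrite expg2 -{2}[y]cgy -yV mulgV.
  case: (pselect (g = 1)) => [->|g1]; first exact: commute_sym (commute1 _).
  have cg2y : commute (g * g) y.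
    apply/commute_conjE.
    have -> : g * g * y * (g * g)^-1 = g * (g * y * g^-1) * g^-1 by rewrite invgM !mulgA.
    rewrite -yV (_ : g * y^-1 * g^-1 = (g * y * g^-1)^-1); last by rewrite !invgM invgK mulgA.
    by rewrite -yV invgK.
  have n_eq : n.+1 = ((n./2).+1 * 2)%N.
    by rewrite muln2 doubleS -[in LHS](odd_double_half n) n_odd add1n.
  have gE : g = (g * g) ^+ (n./2).+1.
    by rewrite -expg2 -expgnA mulnC -n_eq expgSr (order_eq y g n) ?mul1g.
  by rewrite {1}gE; apply/commute_sym/commuteX/commute_sym.
have n_eq : n = (n./2 * 2)%N by rewrite muln2 -[in LHS](odd_double_half n) n_even add0n.
have m_gt0 : 0 < n./2 by move: n_gt0; rewrite {1}n_eq muln_gt0 => /andP[].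
have m_lt : n./2 < n by rewrite {2}n_eq -{1}[n./2]muln1 ltn_mul2l m_gt0.
have ym1 : y ^+ n./2 <> 1.
  by move=> e; have := n_min (n./2); rewrite m_gt0 e eqxx leqNgt m_lt => /(_ isT).
by apply: (order_eq (y ^+ n./2)) => //; [exact: subgX | rewrite -expgnA -n_eq].
Qed.

Lemma single_class_commute y z : G0 y -> G0 z -> commute y z.
Proof.
move=> G0y G0z; have inv x : G0 x -> x^-1 = x by move/single_class_exponent2/mulg1_eq.
rewrite /commute -[y * z]inv ?invgM ?inv //; exact: subgM.
Qed.

End SingleClass.

Section FullFrobenius.
Variable G : fMR_group.
Implicit Types (x y g h : G) (N : G -> Prop).
Local Notation dsub := (@definable_subgroup G).
Local Notation Gr := (fun _ : G => True).

Variable B : G -> Prop.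
Hypotheses (sB : is_subgroup B) (dB : definable B) (mB : malnormal B).
Hypotheses (coverB : forall x, exists g, conj_set B g x) (properB : proper_subset B).

Let dsubB : dsub B := conj sB dB.

Lemma frobenius_rk_pos : 0 < rk1 Gr.
Proof.
apply: rk1_infinite (Def_true G 1) _ => finG.
exact: finite_group_not_covered finG sB coverB properB.
Qed.

Lemma frobenius_rk_lt : rk1 B < rk1 Gr.
Proof.
rewrite ltn_neqAle rk1_mono ?andbT //; [|exact: Def_true | by exists 1; apply: subg1].
apply/eqP => rkB; have [G0 [dG0 _ rkG0 cG0]] := exists_connected_full (dsubT G).
have G0B g x : G0 x -> conj_set B g x.
  move=> G0x; apply: (connected_full_meet cG0 dG0 (dsub_conj g dsubB) (dsubT G) _ _ rkG0) G0x => //.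
  by rewrite rk1_conj // -?rkB; exists 1; apply: subg1.
have [z nBz] := properB.
have G0_1 x : G0 x -> x = 1.
  move=> G0x; have Bx : B x by have := G0B 1 x G0x; rewrite conj_setE invg1 mulg1 mul1g.
  exact: (mB nBz Bx (G0B z x G0x)).
have := frobenius_rk_pos; rewrite -rkG0 rk1_finite //; first by case: dG0.
  by exists 1; case: dG0 => /subg1.
by exists (1 :: nil) => x /G0_1 ->; left.
Qed.

(* Conjugating x into B also conjugates its centralizer into B. *)
Lemma centralizer_in_conj x : x <> 1 -> exists h, forall c, commute c x -> B (h * c * h^-1).
Proof.
move=> x1; have [h Bhx] := coverB x; exists h => c cx.
apply: (malnormal_conj_mem mB Bhx) => [/conj_eq1 //|].
have -> : h * c * h^-1 * (h * x * h^-1) * (h * c * h^-1)^-1 = h * (c * x * c^-1) * h^-1.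
  by rewrite !invgM invgK !mulgA !mulgVK.
by move/commute_conjE: cx => ->.
Qed.

Theorem frobenius_complement_infinite : infinite_set B.
Proof.
move=> [sBl finB]; have [G0 [dG0 _ rkG0 cG0]] := exists_connected_full (dsubT G).
have [sG0 defG0] := dG0.
have finC x : x <> 1 -> finite_set (fun c => commute c x).
  case/centralizer_in_conj=> h hP; exists (List.map (fun b => h^-1 * b * h) sBl) => c cx.
  apply/in_map_iff; exists (h * c * h^-1); split; last exact/finB/hP.
  by rewrite !mulgA mulVg mul1g mulgVK.
have class_generic x : G0 x -> x <> 1 -> generic G0 (conj_class G0 x).
  move=> G0x x1; have dC : definable (centralizer G0 x) by apply: Def_inter defG0 (def_term_eq _ _); def_term.
  have rkC : rk1 (centralizer G0 x) = 0.
    apply: rk1_finite dC _ _; first by exists 1; split; [apply: subg1 | exact: commute_sym (commute1 _)].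
    by have [s Cs] := finC x x1; exists s => c [_ /Cs].
  split; [exact: definable_conj_class | | |].
  - by exists x, 1; rewrite invg1 mulg1 mul1g; split=> //; apply: subg1.
  - by move=> y [g [G0g ->]]; apply: subgD (subgM sG0 G0g G0x) G0g.
  - by rewrite -(rk1_conj_class x dG0) rkC addn0.
have one_class x y : G0 x -> x <> 1 -> G0 y -> y <> 1 -> exists g, G0 g /\ y = g * x * g^-1.
  move=> G0x x1 G0y y1.
  have [z [[g [G0g ->]] [h [G0h ex]]]] := generic_meet dG0 cG0 (class_generic x G0x x1) (class_generic y G0y y1).
  exists (h^-1 * g); split; first exact: subgM sG0 (subgV sG0 G0h) G0g.
  by rewrite conj_mulg invgK ex !mulgA mulVg mul1g mulgVK.
have torsion x : G0 x -> exists n, 0 < n /\ x ^+ n = 1.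
  move=> _; have [h Bhx] := coverB x; pose p k := (h * x * h^-1) ^+ k.
  have [k [l [kl pkl]]] := pigeonhole (s := sBl) (f := p) (fun k => finB _ (subgX k sB Bhx)).
  have {k l kl pkl} [k [l [lt pkl]]] : exists k l, k < l /\ p k = p l.
    by case: (ltngtP k l) => [lt|lt|e]; [exists k, l | exists l, k | case: kl].
  exists (l - k); split; first by rewrite subn_gt0.
  have : p (l - k) * p k = 1 * p k by rewrite mul1g {2}pkl /p -expgnDr (subnK (ltnW lt)).
  by move/mulIg; rewrite /p expg_conj => /conj_eq1.
have [x0 [G0x0 x01]] := dsub_nontrivial dG0 (leq_trans frobenius_rk_pos (eq_leq (esym rkG0))).
have := frobenius_rk_pos; rewrite -rkG0 rk1_finite //; first by exists 1; apply: subg1.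
have [s Cs] := finC x0 x01; exists s => c G0c; apply: Cs.
exact: (single_class_commute sG0 one_class torsion G0c G0x0).
Qed.

Lemma frobenius_rk_complement_pos : 0 < rk1 B.
Proof. exact: rk1_infinite dB frobenius_complement_infinite. Qed.

Theorem frobenius_complement_connected : connected_group G -> connected_subgroup B.
Proof.
move=> cG K dK KB fiK x Bx.
have rkK : rk1 K = rk1 B by apply/(finite_indexP dK dsubB KB).
have [K0 [dK0 K0K rkK0 cK0]] := exists_connected_full dK; have [sK0 defK0] := dK0.
have K0B y : K0 y -> B y by move/K0K/KB.
have rkK0B : rk1 K0 = rk1 B by rewrite rkK0 rkK.
have K0_normal b y : B b -> K0 y -> K0 (b * y * b^-1).
  move=> Bb K0y; apply: (connected_full_meet cK0 dK0 (dsub_conj b dK0) dsubB K0B _ rkK0B) K0y.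
    by move=> z /K0B Bbz; rewrite -(mulKg b z) -(mulgVK b (b * z)) mulgA; apply: subgM (subgM sB (subgV sB Bb) Bbz) Bb.
  by rewrite rk1_conj ?rkK0B //; exists 1; apply: subg1.
apply: K0K; apply: contrapT => nK0x.
pose D1 y := K0 y /\ y <> 1.
have [k0 K0k0] : exists k0, D1 k0 by apply: dsub_nontrivial dK0 _; rewrite rkK0B frobenius_rk_complement_pos.
have rkBT : rk1 (fun y => B y /\ True) = rk1 B by apply: rk1_ext => y; split=> [[]|].
have gen1 : generic Gr (conj_union Gr D1).
  apply: conj_union_generic sB dB mB (dsubT G) _ (ex_intro _ k0 K0k0) _ _ _ => [||[_ []] //|].
  - exact: Def_inter defK0 (Def_compl (definable_pred1 1)).
  - by move=> y [/K0B].
  - by rewrite rkBT /D1 rk1_setD1 ?rkK0B //; exists k0.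
have gen2 : generic Gr (conj_union Gr (rcoset K0 x)).
  apply: conj_union_generic sB dB mB (dsubT G) (definable_rcoset _ defK0) _ _ _ _ => [||K01|].
  - by exists x; apply: mem_rcoset.
  - by move=> y /K0B Byx; split=> //; rewrite -(mulgVK x y); apply: subgM.
  - by apply: nK0x; apply: subgVr sK0 _; rewrite -[x^-1]mul1g.
  - by rewrite rkBT rk1_rcoset_sub.
have [y [[g [_ [K0gy gy1]]] [h [_ K0hyx]]]] := generic_meet (dsubT G) cG gen1 gen2.
have Bhg : B (h / g).
  apply: (malnormal_conj_mem mB (K0B _ K0gy) gy1).
  rewrite (_ : _ * _ * _ = h * y * h^-1); last by rewrite invgM invgK !mulgA !mulgVK.
  by rewrite -(mulgVK x (h * y * h^-1)); apply: subgM sB (K0B _ K0hyx) Bx.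
have := K0_normal _ _ Bhg K0gy.
rewrite (_ : _ * _ * _ = h * y * h^-1); last by rewrite invgM invgK !mulgA !mulgVK.
move=> K0hy; apply: nK0x.
rewrite (_ : x = (h * y * h^-1 / x)^-1 * (h * y * h^-1)); last by rewrite invgM invgK mulgVK.
exact: subgM sK0 (subgV sK0 K0hyx) K0hy.
Qed.

Lemma normal_conj_mem N g y : normal_subgroup N -> N y -> N (g * y * g^-1).
Proof. by case=> _ nN Ny; have : N (g^-1^-1 * y * g^-1) := nN g^-1 y Ny; rewrite invgK. Qed.

(* A finite normal subgroup would meet B in some c with a finite conjugacy class;
   then C_G(c), which lies in B, would have full rank. *)
Lemma normal_rk_pos N : nontrivial N -> definable N -> normal_subgroup N -> 0 < rk1 N.
Proof.
move=> [n1 [Nn1 n11]] dN nN; rewrite lt0n; apply/eqP => /(rk1_eq0_finite dN)[sN finN].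
have [h Bc] := coverB n1; set c := h * n1 * h^-1 in Bc.
have c1 : c <> 1 by move/conj_eq1.
have rkclass : rk1 (conj_class Gr c) = 0.
  apply: rk1_finite; [exact: definable_conj_class (Def_true G 1) | |].
    by exists c, 1; split=> //; rewrite invg1 mulg1 mul1g.
  by exists sN => y [g [_ ->]]; apply: finN; rewrite /c; do 2!apply: (normal_conj_mem _ nN).
have CB g : centralizer Gr c g -> B g.
  by case=> _ /commute_conjE cg; apply: (malnormal_conj_mem mB Bc c1); rewrite cg.
have := frobenius_rk_lt; rewrite -(rk1_conj_class c (dsubT G)) rkclass add0n ltnNge.
case/negP; apply: rk1_mono CB; [|exact: dB|by exists 1; split=> //; exact: commute_sym (commute1 _)].
by apply: Def_inter (Def_true G 1) (def_term_eq _ _); def_term.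
Qed.

Theorem frobenius_normal_product N : nontrivial N -> definable N -> normal_subgroup N ->
  product_is_whole N B.
Proof.
move=> ntN dN nN; have [sN _] := nN; have dsubN : dsub N by [].
have [N0 [dN0 N0N rkN0 cN0]] := exists_connected_full dsubN; have [sN0 defN0] := dN0.
have N0_normal g y : N0 y -> N0 (g * y * g^-1).
  move=> N0y; apply: (connected_full_meet cN0 dN0 (dsub_conj g dN0) dsubN N0N _ rkN0) N0y.
    move=> z /N0N /(normal_conj_mem g^-1 nN).
    by rewrite -conj_mulg mulVg mul1g invg1 mulg1.
  by rewrite rk1_conj ?rkN0 //; exists 1; apply: subg1.
have [n0 [N0n0 n01]] := dsub_nontrivial dN0 (leq_trans (normal_rk_pos ntN dN nN) (eq_leq (esym rkN0))).
have [h0 Bc0] := coverB n0; set c0 := h0 * n0 * h0^-1 in Bc0.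
have N0c0 : N0 c0 := N0_normal h0 _ N0n0.
have c01 : c0 <> 1 by move/conj_eq1.
pose D (M : G -> Prop) y := (M y /\ N0 y) /\ y <> 1.
have genD M : is_subgroup M -> definable M -> malnormal M -> (exists y, D M y) ->
    generic N0 (conj_union N0 (D M)).
  move=> sM dM mM [y DMy]; have dMN0 : definable (fun y => M y /\ N0 y) := Def_inter dM defN0.
  apply: conj_union_generic sM dM mM dN0 _ (ex_intro _ y DMy) _ _ _ => [||[_ /(_ erefl)] //|].
  - exact: Def_inter dMN0 (Def_compl (definable_pred1 1)).
  - by move=> z [].
  - by rewrite /D rk1_setD1 //; exists y.
move=> x; pose M2 := conj_set B x^-1.
have gen1 : generic N0 (conj_union N0 (D B)) by apply: genD => //; exists c0.
have gen2 : generic N0 (conj_union N0 (D M2)).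
  apply: genD; [exact: subg_conj | exact: definable_conj | exact: malnormal_conj |].
  exists (x * c0 * x^-1); split; last by move/conj_eq1.
  by split; [rewrite /M2 conj_setE -conj_mulg mulVg mul1g invg1 mulg1 | apply: N0_normal].
have [y [[g [N0g [[Bgy _] gy1]]] [h [N0h [[M2hy _] _]]]]] := generic_meet dN0 cN0 gen1 gen2.
have Bk : B (x^-1 * h / g).
  apply: (malnormal_conj_mem mB Bgy gy1).
  have -> : x^-1 * h / g * (g * y * g^-1) * (x^-1 * h / g)^-1 = x^-1 * (h * y * h^-1) * x^-1^-1.
    by rewrite !invgM !invgK !mulgA !mulgVK.
  exact: M2hy.
exists (h / g), (x^-1 * h / g)^-1; split; first exact: N0N (subgD sN0 N0h N0g).
split; first exact: subgV.
change (x = h / g * (x^-1 * h / g)^-1).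
by rewrite !invgM !invgK !mulgA mulgVK mulgV mul1g.
Qed.

End FullFrobenius.

Unset Implicit Arguments.

Theorem mainTheorem4 (G : fMR_group) (B : G -> Prop) :
  full_frobenius_with B ->
  [/\ infinite_set B,
      connected_group G -> connected_subgroup B
    & forall N : G -> Prop,
        nontrivial N -> definable N -> normal_subgroup N ->
        product_is_whole N B].
Proof.
move=> [[[sB dB] [mB coverB]] properB]; split.
- exact: (frobenius_complement_infinite sB mB coverB properB).
- exact: (frobenius_complement_connected sB dB mB coverB properB).
- exact: (frobenius_normal_product sB dB mB coverB properB).
Qed.
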